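(* Let $d\ge1$, $\epsilon>0$ and $\delta\ge0$ with $C_d\delta<1$. Then Mechanism-1 is unbiased: for every $x\in[-1,1]^d$, $\mathbb{E}[\mathcal{M}(x)]=x$ (coordinatewise).
   Context: Fix an integer $d\ge 1$. Let $C_d=2^{d-1}$ if $d$ is odd and $C_d=2^{d-1}-\frac12\binom{d}{d/2}$ if $d$ is even. For $B>0$ and $v\in\{-1,1\}^d$ let $T^+(v)=\{y\in\{-B,B\}^d: y\cdot v>0\}$, $T^-(v)=\{y\in\{-B,B\}^d: y\cdot v\le 0\}$. For $\alpha\in[0,1]$, $\mathcal{M}_{\alpha,B}$ takes $x\in[-1,1]^d$, samples $V\in\{-1,1\}^d$ with independent coordinates $\mathbb{P}[V_j=\pm1]=\frac12\pm\frac12x_j$, independently samples $u\in\{0,1\}$ with $\mathbb{P}[u=1]=\alpha$, and outputs a uniformly random element of $T^+(V)$ if $u=1$ and of $T^-(V)$ if $u=0$. Mechanism-1 with parameters $\epsilon>0,\delta\ge0$ is $\mathcal{M}=\mathcal{M}_{\alpha_{\epsilon,\delta},B_{\epsilon,\delta}}$ where $\alpha_{\epsilon,\delta}=\frac{e^\epsilon+C_d\delta}{e^\epsilon+1}$ if $d$ is odd and $\alpha_{\epsilon,\delta}=\frac{e^\epsilon C_d+\delta C_d(2^d-C_d)}{(e^\epsilon-1)C_d+2^d}$ if $d$ is even, and $B_{\epsilon,\delta}=\frac{2^d+C_d(e^\epsilon-1)}{\binom{d-1}{(d-1)/2}(e^\epsilon+2^d\delta-1)}$ if $d$ is odd, $B_{\epsilon,\delta}=\frac{2^d+C_d(e^\epsilon-1)}{\binom{d-1}{d/2}(e^\epsilon+2^d\delta-1)}$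 if $d$ is even. *)

From Stdlib Require Import Reals Lra Lia List Binomial.
Import ListNotations.
Open Scope R_scope.

Definition sumR (l : list R) : R := fold_right Rplus 0 l.

Fixpoint sign_vectors (d : nat) : list (list R) :=
  match d with
  | O => [nil]
  | S n => map (cons 1) (sign_vectors n) ++ map (cons (-1)) (sign_vectors n)
  end.

Definition cube (B : R) (d : nat) : list (list R) :=
  map (map (Rmult B)) (sign_vectors d).

Definition dot (u v : list R) : R :=
  sumR (map (fun p => fst p * snd p) (combine u v)).

Definition Tplus (B : R) (d : nat) (v : list R) : list (list R) :=
  filter (fun y => if Rlt_dec 0 (dot y v) then true else false) (cube B d).
Definition Tminus (B : R) (d : nat) (v : list R) : list (list R) :=
  filter (fun y => if Rlt_dec 0 (dot y v) then false else true) (cube B d).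

(* j-th coordinate of the mean of the uniform distribution on a finite list
   of (distinct) vectors. *)
Definition unif_mean (j : nat) (L : list (list R)) : R :=
  sumR (map (fun y => nth j y 0) L) / INR (length L).

(* P[V = v] when V_j are independent with P[V_j = +-1] = 1/2 +- x_j/2. *)
Definition probV (x v : list R) : R :=
  fold_right Rmult 1 (map (fun p => 1/2 + 1/2 * fst p * snd p) (combine x v)).

(* j-th coordinate of E[M_{alpha,B}(x)]. *)
Definition mech_mean (alpha B : R) (d : nat) (x : list R) (j : nat) : R :=
  sumR (map (fun v => probV x v *
              (alpha * unif_mean j (Tplus B d v)
               + (1 - alpha) * unif_mean j (Tminus B d v)))
            (sign_vectors d)).

Definition Cd (d : nat) : R :=
  if Nat.odd d then 2 ^ (d - 1)
  else 2 ^ (d - 1) - / 2 * C d (Nat.div d 2).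

Definition alpha_ed (d : nat) (eps delta : R) : R :=
  if Nat.odd d then (exp eps + Cd d * delta) / (exp eps + 1)
  else (exp eps * Cd d + delta * Cd d * (2 ^ d - Cd d))
       / ((exp eps - 1) * Cd d + 2 ^ d).

Definition B_ed (d : nat) (eps delta : R) : R :=
  if Nat.odd d then
    (2 ^ d + Cd d * (exp eps - 1))
    / (C (d - 1) (Nat.div (d - 1) 2) * (exp eps + 2 ^ d * delta - 1))
  else
    (2 ^ d + Cd d * (exp eps - 1))
    / (C (d - 1) (Nat.div d 2) * (exp eps + 2 ^ d * delta - 1)).

Definition mechanism1_mean (d : nat) (eps delta : R) (x : list R) (j : nat) : R :=
  mech_mean (alpha_ed d eps delta) (B_ed d eps delta) d x j.

From Stdlib Require Import Reals List Lra Lia Arith Binomial.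
Open Scope R_scope.

(* Write [walk_sum d f] for the sum of f(s_1 + ... + s_d) over s in {-1,1}^d.
   For a sign vector v, substituting y_i = B s_i v_i turns a sum of phi(y.v)
   over the cube {-B,B}^d into a walk sum (cube_sum_dot); weighting by y_j
   leaves B v_j times the walk sum over d-1 steps of the jump
   phi(B(s+1)) - phi(B(s-1)) (cube_sum_dot_coord).  Applied to T^+(v) and
   T^-(v) and averaged against the law of V, whose mean is x, this gives for
   every alpha and every B > 0 (mech_mean_formula)
       E[M_{alpha,B}(x)] = B c (alpha / N - (1 - alpha) / (2^d - N)) x,
   where N counts the walks ending above 0 and c those ending at -1 or 0.
   Counting walks gives N = C_d and c = C(d-1, floor(d/2)), and a field
   computation shows that the alpha and B of Mechanism-1 make the factor 1. *)

Fixpoint walk_sum (m : nat) (f : R -> R) : R :=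
  match m with
  | O => f 0
  | S m' => walk_sum m' (fun s => f (s + 1)) + walk_sum m' (fun s => f (s - 1))
  end.

Lemma walk_sum_ext m : forall f g, (forall s, f s = g s) -> walk_sum m f = walk_sum m g.
Proof.
  induction m as [|m IH]; intros f g H; simpl; [apply H|].
  f_equal; apply IH; intros; apply H.
Qed.

Lemma walk_sum_plus m : forall f g,
  walk_sum m (fun s => f s + g s) = walk_sum m f + walk_sum m g.
Proof.
  induction m as [|m IH]; intros f g; simpl; [reflexivity|].
  rewrite IH, IH. ring.
Qed.

Lemma walk_sum_scal m : forall c f, walk_sum m (fun s => c * f s) = c * walk_sum m f.
Proof.
  induction m as [|m IH]; intros c f; simpl; [reflexivity|].
  rewrite IH, IH. ring.
Qed.

Lemma walk_sum_minus m f g :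
  walk_sum m (fun s => f s - g s) = walk_sum m f - walk_sum m g.
Proof.
  rewrite (walk_sum_ext m _ (fun s => f s + (-1) * g s)) by (intros; ring).
  rewrite walk_sum_plus, walk_sum_scal. ring.
Qed.

Lemma walk_sum_const m : forall c, walk_sum m (fun _ => c) = 2 ^ m * c.
Proof.
  induction m as [|m IH]; intros c; simpl; [ring|].
  rewrite IH. ring.
Qed.

Lemma walk_sum_mono m : forall f g, (forall s, f s <= g s) -> walk_sum m f <= walk_sum m g.
Proof.
  induction m as [|m IH]; intros f g H; simpl; [apply H|].
  apply Rplus_le_compat; apply IH; intros; apply H.
Qed.

(* Flipping all signs is a bijection of the walks. *)
Lemma walk_sum_reflect m : forall f, walk_sum m (fun s => f (- s)) = walk_sum m f.
Proof.
  induction m as [|m IH]; intros f; simpl.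
  - rewrite Ropp_0; reflexivity.
  - rewrite (walk_sum_ext m (fun s => f (- (s + 1))) (fun s => f (- s - 1)))
      by (intros; f_equal; ring).
    rewrite (walk_sum_ext m (fun s => f (- (s - 1))) (fun s => f (- s + 1)))
      by (intros; f_equal; ring).
    rewrite (IH (fun t => f (t - 1))), (IH (fun t => f (t + 1))). ring.
Qed.

Lemma walk_sum_support m : forall f g,
  (forall k, (k <= m)%nat -> f (2 * INR k - INR m) = g (2 * INR k - INR m)) ->
  walk_sum m f = walk_sum m g.
Proof.
  induction m as [|m IH]; intros f g H; simpl.
  - specialize (H O (le_n _)). simpl in H. replace 0 with (2 * 0 - 0) by ring. exact H.
  - f_equal; apply IH; intros k Hk.
    + specialize (H (S k) ltac:(lia)). rewrite !S_INR in H.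
      replace (2 * INR k - INR m + 1) with (2 * (INR k + 1) - (INR m + 1)) by ring.
      exact H.
    + specialize (H k ltac:(lia)). rewrite !S_INR in H.
      replace (2 * INR k - INR m - 1) with (2 * INR k - (INR m + 1)) by ring.
      exact H.
Qed.

Definition indicator_at (b s : R) : R := if Req_EM_T s b then 1 else 0.

Lemma walk_sum_indicator_off m b :
  (forall k, (k <= m)%nat -> 2 * INR k - INR m <> b) ->
  walk_sum m (indicator_at b) = 0.
Proof.
  intros Hb. rewrite (walk_sum_support m _ (fun _ => 0)).
  - rewrite walk_sum_const; ring.
  - intros k Hk. unfold indicator_at.
    destruct Req_EM_T as [E|]; [exfalso; exact (Hb k Hk E)|reflexivity].
Qed.

Lemma C_n0 n : C n 0 = 1.
Proof.
  unfold C. rewrite Nat.sub_0_r. simpl (INR (fact 0)).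
  field. apply INR_fact_neq_0.
Qed.

Lemma C_nn n : C n n = 1.
Proof.
  unfold C. rewrite Nat.sub_diag. simpl (INR (fact 0)).
  field. apply INR_fact_neq_0.
Qed.

(* Exactly C(m,K) walks of length m end at 2K - m (K steps up); this is
   Pascal's rule read on the last step. *)
Lemma walk_sum_indicator m : forall K, (K <= m)%nat ->
  walk_sum m (indicator_at (2 * INR K - INR m)) = C m K.
Proof.
  induction m as [|m IH]; intros K HK.
  - assert (K = O) by lia; subst. simpl. unfold indicator_at, C. simpl.
    destruct Req_EM_T; [field|lra].
  - rewrite S_INR. cbn [walk_sum].
    rewrite (walk_sum_ext m _ (indicator_at (2 * INR K - INR m - 2))) by
      (intros; unfold indicator_at; do 2 destruct Req_EM_T; auto; lra).
    rewrite (walk_sum_ext m (fun s => indicator_at _ (s - 1))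
               (indicator_at (2 * INR K - INR m))) by
      (intros; unfold indicator_at; do 2 destruct Req_EM_T; auto; lra).
    destruct K as [|K].
    + rewrite walk_sum_indicator_off.
      2:{ intros k Hk. apply le_INR in Hk. pose proof (pos_INR k). simpl. lra. }
      rewrite (IH O ltac:(lia)), !C_n0. ring.
    + destruct (Nat.eq_dec K m) as [->|HKm].
      * rewrite (walk_sum_indicator_off m (2 * INR (S m) - INR m)).
        2:{ intros k Hk. apply le_INR in Hk. rewrite S_INR. lra. }
        replace (2 * INR (S m) - INR m - 2) with (2 * INR m - INR m)
          by (rewrite S_INR; ring).
        rewrite IH, !C_nn by lia. ring.
      * replace (2 * INR (S K) - INR m - 2) with (2 * INR K - INR m)
          by (rewrite S_INR; ring).
        rewrite !IH by lia. apply pascal. lia.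
Qed.

Definition is_sign (t : R) : Prop := t = 1 \/ t = -1.

Lemma sign_sum_swap (H : R -> R) v0 : is_sign v0 -> H v0 + H (- v0) = H 1 + H (-1).
Proof.
  intros [-> | ->]; [reflexivity|].
  replace (- -1) with 1 by ring. ring.
Qed.

Lemma sign_diff_swap (H : R -> R) v0 :
  is_sign v0 -> H v0 - H (- v0) = v0 * (H 1 - H (-1)).
Proof.
  intros [-> | ->]; [rewrite Rmult_1_l; reflexivity|].
  replace (- -1) with 1 by ring. ring.
Qed.

Lemma sumR_app l1 l2 : sumR (l1 ++ l2) = sumR l1 + sumR l2.
Proof. induction l1; simpl; [ring|rewrite IHl1; ring]. Qed.

Lemma sumR_scal {A} (f : A -> R) c l :
  sumR (map (fun y => c * f y) l) = c * sumR (map f l).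
Proof. induction l; simpl; [ring|rewrite IHl; ring]. Qed.

Definition cube_sum (B : R) (d : nat) (F : list R -> R) : R := sumR (map F (cube B d)).

Lemma cube_sum_scal_r B d F c :
  cube_sum B d (fun y => F y * c) = c * cube_sum B d F.
Proof.
  unfold cube_sum. rewrite <- sumR_scal. f_equal. apply map_ext; intros; ring.
Qed.

Lemma cube_sum_S B d F :
  cube_sum B (S d) F = cube_sum B d (fun y => F (B :: y)) + cube_sum B d (fun y => F (- B :: y)).
Proof.
  unfold cube_sum, cube. simpl. rewrite !map_app, !map_map, sumR_app.
  f_equal; f_equal; apply map_ext; intros; simpl; f_equal; f_equal; ring.
Qed.

Lemma cube_sum_dot B d : forall v phi, length v = d -> Forall is_sign v ->
  cube_sum B d (fun y => phi (dot y v)) = walk_sum d (fun s => phi (B * s)).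
Proof.
  induction d as [|d IH]; intros v phi Hl Hv.
  - destruct v; [|discriminate]. unfold cube_sum, dot; simpl. rewrite Rmult_0_r. ring.
  - destruct v as [|v0 v']; [discriminate|]. injection Hl as Hl.
    inversion_clear Hv as [|? ? Hv0 Hv'].
    rewrite cube_sum_S.
    change (cube_sum B d (fun y => phi (B * v0 + dot y v'))
          + cube_sum B d (fun y => phi (- B * v0 + dot y v'))
          = walk_sum (S d) (fun s => phi (B * s))).
    rewrite (IH v' (fun s => phi (B * v0 + s)) Hl Hv').
    rewrite (IH v' (fun s => phi (- B * v0 + s)) Hl Hv').
    pose (H := fun t => walk_sum d (fun s => phi (B * (s + t)))).
    transitivity (H v0 + H (- v0)).
    { unfold H; f_equal; apply walk_sum_ext; intros; f_equal; ring. }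
    rewrite sign_sum_swap by exact Hv0. reflexivity.
Qed.

(* Weighting by the j-th coordinate: the contributions of y_j = B and
   y_j = -B differ by one step of the walk. *)
Lemma cube_sum_dot_coord B d : forall v phi j,
  length v = d -> Forall is_sign v -> (j < d)%nat ->
  cube_sum B d (fun y => phi (dot y v) * nth j y 0) =
  B * nth j v 0 * walk_sum (d - 1) (fun s => phi (B * (s + 1)) - phi (B * (s - 1))).
Proof.
  induction d as [|d IH]; intros v phi j Hl Hv Hj; [lia|].
  destruct v as [|v0 v']; [discriminate|]. injection Hl as Hl.
  inversion_clear Hv as [|? ? Hv0 Hv'].
  rewrite cube_sum_S. replace (S d - 1)%nat with d by lia.
  destruct j as [|j].
  - pose (H := fun t => walk_sum d (fun s => phi (B * (s + t)))).
    transitivity (B * (H v0 - H (- v0))).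
    + change (cube_sum B d (fun y => phi (B * v0 + dot y v') * B)
            + cube_sum B d (fun y => phi (- B * v0 + dot y v') * - B)
            = B * (H v0 - H (- v0))).
      rewrite !cube_sum_scal_r.
      rewrite (cube_sum_dot B d v' (fun s => phi (B * v0 + s)) Hl Hv').
      rewrite (cube_sum_dot B d v' (fun s => phi (- B * v0 + s)) Hl Hv').
      unfold H; rewrite Rmult_minus_distr_l, <- Ropp_mult_distr_l; unfold Rminus.
      f_equal; [|f_equal]; f_equal; apply walk_sum_ext; intros; f_equal; ring.
    + rewrite sign_diff_swap by exact Hv0.
      unfold H; simpl nth. rewrite <- walk_sum_minus.
      rewrite Rmult_assoc. reflexivity.
  - destruct d as [|d]; [lia|]. replace (S d - 1)%nat with d in IH by lia.
    change (cube_sum B (S d) (fun y => phi (B * v0 + dot y v') * nth j y 0)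
          + cube_sum B (S d) (fun y => phi (- B * v0 + dot y v') * nth j y 0)
          = B * nth j v' 0 * walk_sum (S d)
              (fun s => phi (B * (s + 1)) - phi (B * (s - 1)))).
    rewrite (IH v' (fun s => phi (B * v0 + s)) j Hl Hv' ltac:(lia)).
    rewrite (IH v' (fun s => phi (- B * v0 + s)) j Hl Hv' ltac:(lia)).
    pose (H := fun t => B * nth j v' 0 *
           walk_sum d (fun s => phi (B * (s + 1 + t)) - phi (B * (s - 1 + t)))).
    transitivity (H v0 + H (- v0)).
    { unfold H; f_equal; f_equal; apply walk_sum_ext; intros; f_equal; f_equal; ring. }
    rewrite sign_sum_swap by exact Hv0.
    unfold H; simpl nth; cbn [walk_sum]. rewrite Rmult_plus_distr_l.
    f_equal; f_equal; apply walk_sum_ext; intros; f_equal; f_equal; ring.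
Qed.

Definition ind (b : R -> bool) (t : R) : R := if b t then 1 else 0.

Lemma length_filter_sum {A} (f : A -> bool) l :
  INR (length (filter f l)) = sumR (map (fun y => if f y then 1 else 0) l).
Proof.
  induction l as [|a l IH]; [reflexivity|].
  cbn [filter map]. destruct (f a); cbn [length]; rewrite ?S_INR, IH;
  unfold sumR; cbn [fold_right]; ring.
Qed.

Lemma sumR_filter {A} (f : A -> bool) g l :
  sumR (map g (filter f l)) = sumR (map (fun y => if f y then g y else 0) l).
Proof. induction l; simpl; [reflexivity|]. destruct (f a); simpl; rewrite IHl; ring. Qed.

Lemma unif_mean_filter_dot (b : R -> bool) B d v j :
  length v = d -> Forall is_sign v -> (j < d)%nat ->
  unif_mean j (filter (fun y => b (dot y v)) (cube B d)) =
  B * nth j v 0 * walk_sum (d - 1) (fun s => ind b (B * (s + 1)) - ind b (B * (s - 1)))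
  / walk_sum d (fun s => ind b (B * s)).
Proof.
  intros Hl Hv Hj. unfold unif_mean.
  rewrite sumR_filter, length_filter_sum.
  rewrite (map_ext _ (fun y => ind b (dot y v) * nth j y 0))
    by (intros; unfold ind; destruct b; ring).
  rewrite (map_ext (fun y => if b (dot y v) then 1 else 0) (fun y => ind b (dot y v)))
    by reflexivity.
  change (sumR (map ?F (cube B d))) with (cube_sum B d F).
  rewrite cube_sum_dot_coord, cube_sum_dot by assumption. reflexivity.
Qed.

Definition pos_test (t : R) : bool := if Rlt_dec 0 t then true else false.
Definition nonpos_test (t : R) : bool := if Rlt_dec 0 t then false else true.

Lemma ind_pos_scale B t : 0 < B -> ind pos_test (B * t) = ind pos_test t.
Proof.
  intros HB. unfold ind, pos_test.
  destruct (Rlt_dec 0 (B * t)) as [H1|H1], (Rlt_dec 0 t) as [H2|H2]; try reflexivity.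
  - exfalso. apply H2. apply Rnot_le_lt. intro. assert (B * t <= 0) by nra. lra.
  - exfalso. apply H1. nra.
Qed.

Lemma ind_nonpos t : ind nonpos_test t = 1 - ind pos_test t.
Proof. unfold ind, nonpos_test, pos_test. destruct Rlt_dec; ring. Qed.

Lemma sign_vectors_spec d : forall v, In v (sign_vectors d) -> length v = d /\ Forall is_sign v.
Proof.
  induction d as [|d IH]; intros v Hv; simpl in Hv.
  - destruct Hv as [<-|[]]. split; [reflexivity|constructor].
  - apply in_app_or in Hv. destruct Hv as [Hv|Hv]; apply in_map_iff in Hv;
    destruct Hv as [w [<- Hw]]; apply IH in Hw; destruct Hw as [H1 H2];
    (split; [simpl; rewrite H1; reflexivity|constructor; [unfold is_sign|]; auto]).
Qed.

Lemma sum_sign_vectors_S d (F : list R -> R) :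
  sumR (map F (sign_vectors (S d))) =
  sumR (map (fun v => F (1 :: v)) (sign_vectors d))
  + sumR (map (fun v => F (-1 :: v)) (sign_vectors d)).
Proof. simpl. rewrite map_app, !map_map, sumR_app. reflexivity. Qed.

Lemma probV_total d : forall x, length x = d -> sumR (map (probV x) (sign_vectors d)) = 1.
Proof.
  induction d as [|d IH]; intros x Hx.
  - destruct x; [|discriminate]. unfold sumR, probV; simpl; ring.
  - destruct x as [|x0 x]; [discriminate|]. injection Hx as Hx.
    rewrite sum_sign_vectors_S.
    change (sumR (map (fun v => (1/2 + 1/2 * x0 * 1) * probV x v) (sign_vectors d))
          + sumR (map (fun v => (1/2 + 1/2 * x0 * -1) * probV x v) (sign_vectors d)) = 1).
    rewrite !sumR_scal, IH by assumption. field.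
Qed.

Lemma probV_mean d : forall x j, length x = d -> (j < d)%nat ->
  sumR (map (fun v => probV x v * nth j v 0) (sign_vectors d)) = nth j x 0.
Proof.
  induction d as [|d IH]; intros x j Hx Hj; [lia|].
  destruct x as [|x0 x]; [discriminate|]. injection Hx as Hx.
  rewrite sum_sign_vectors_S.
  destruct j as [|j].
  - change (sumR (map (fun v => (1/2 + 1/2 * x0 * 1) * probV x v * 1) (sign_vectors d))
          + sumR (map (fun v => (1/2 + 1/2 * x0 * -1) * probV x v * -1) (sign_vectors d))
          = x0).
    rewrite (map_ext (fun v => _ * probV x v * 1) (fun v => (1/2 + 1/2 * x0) * probV x v))
      by (intros; ring).
    rewrite (map_ext (fun v => _ * probV x v * -1) (fun v => - (1/2 - 1/2 * x0) * probV x v))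
      by (intros; ring).
    rewrite !sumR_scal, probV_total by assumption. field.
  - change (sumR (map (fun v => (1/2 + 1/2 * x0 * 1) * probV x v * nth j v 0) (sign_vectors d))
          + sumR (map (fun v => (1/2 + 1/2 * x0 * -1) * probV x v * nth j v 0) (sign_vectors d))
          = nth j x 0).
    rewrite (map_ext (fun v => (1/2 + 1/2 * x0 * 1) * probV x v * nth j v 0)
                     (fun v => (1/2 + 1/2 * x0 * 1) * (probV x v * nth j v 0)))
      by (intros; ring).
    rewrite (map_ext (fun v => (1/2 + 1/2 * x0 * -1) * probV x v * nth j v 0)
                     (fun v => (1/2 + 1/2 * x0 * -1) * (probV x v * nth j v 0)))
      by (intros; ring).
    rewrite !sumR_scal, IH by lia. field.
Qed.

Lemma mech_mean_formula alpha B d x j :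
  0 < B -> length x = d -> (j < d)%nat ->
  let N := walk_sum d (ind pos_test) in
  let c := walk_sum (d - 1) (fun s => ind pos_test (s + 1) - ind pos_test (s - 1)) in
  mech_mean alpha B d x j = B * c * (alpha / N - (1 - alpha) / (2 ^ d - N)) * nth j x 0.
Proof.
  intros HB Hx Hj N c. unfold mech_mean.
  rewrite (map_ext_in _ (fun v => B * c * (alpha / N - (1 - alpha) / (2 ^ d - N))
                                  * (probV x v * nth j v 0))).
  { rewrite sumR_scal, probV_mean by assumption. reflexivity. }
  intros v Hv. apply sign_vectors_spec in Hv as [Hvl Hvs].
  unfold Tplus, Tminus.
  change (fun y => if Rlt_dec 0 (dot y v) then true else false)
    with (fun y => pos_test (dot y v)).
  change (fun y => if Rlt_dec 0 (dot y v) then false else true)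
    with (fun y => nonpos_test (dot y v)).
  rewrite !unif_mean_filter_dot by assumption.
  rewrite !(walk_sum_ext _ (fun s => ind nonpos_test _ - ind nonpos_test _)
              (fun s => -1 * (ind pos_test (s + 1) - ind pos_test (s - 1))))
    by (intros; rewrite !ind_nonpos, !ind_pos_scale by exact HB; ring).
  rewrite (walk_sum_ext _ (fun s => ind nonpos_test (B * s)) (fun s => 1 - ind pos_test s))
    by (intros; rewrite ind_nonpos, ind_pos_scale by exact HB; reflexivity).
  rewrite (walk_sum_ext _ (fun s => ind pos_test (B * s)) (ind pos_test))
    by (intros; apply ind_pos_scale, HB).
  rewrite (walk_sum_ext _ (fun s => ind pos_test (B * _) - _)
              (fun s => ind pos_test (s + 1) - ind pos_test (s - 1)))
    by (intros; rewrite !ind_pos_scale by exact HB; reflexivity).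
  rewrite walk_sum_scal, (walk_sum_minus d (fun _ => 1) (ind pos_test)), walk_sum_const, Rmult_1_r.
  fold N c. unfold Rdiv. ring.
Qed.

Lemma parity_split d : d = (2 * (d / 2) + (if Nat.odd d then 1 else 0))%nat.
Proof.
  rewrite <- Nat.div2_div. pose proof (Nat.div2_odd d) as E.
  destruct (Nat.odd d); simpl in E; lia.
Qed.

Lemma INR_parity_split d : INR d = 2 * INR (d / 2) + (if Nat.odd d then 1 else 0).
Proof.
  rewrite (parity_split d) at 1. rewrite plus_INR, mult_INR.
  destruct (Nat.odd d); reflexivity.
Qed.

(* N = C_d: by symmetry the walks ending at a positive point are half of
   those not ending at 0, and C(d, d/2) walks end at 0 when d is even. *)
Lemma walk_sum_pos_count d : (1 <= d)%nat -> walk_sum d (ind pos_test) = Cd d.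
Proof.
  intros Hd.
  assert (Htot : 2 ^ d = 2 * walk_sum d (ind pos_test) + walk_sum d (indicator_at 0)).
  { rewrite <- (Rmult_1_r (2 ^ d)), <- walk_sum_const.
    rewrite (walk_sum_ext d (fun _ => 1)
               (fun s => (ind pos_test s + ind pos_test (- s)) + indicator_at 0 s)).
    2:{ intros s. unfold ind, pos_test, indicator_at.
        do 2 destruct Rlt_dec; destruct Req_EM_T; lra. }
    rewrite !walk_sum_plus, (walk_sum_reflect d (ind pos_test)). ring. }
  assert (H2 : 2 ^ d = 2 * 2 ^ (d - 1))
    by (destruct d; [lia|]; simpl; rewrite Nat.sub_0_r; ring).
  pose proof (INR_parity_split d) as Hpar.
  pose proof (parity_split d) as Hsplit.
  unfold Cd. destruct (Nat.odd d).
  - rewrite walk_sum_indicator_off in Htot; [lra|].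
    intros k Hk E. assert (E' : INR (2 * k) = INR d) by (rewrite mult_INR; simpl; lra).
    apply INR_eq in E'. lia.
  - replace (indicator_at 0) with (indicator_at (2 * INR (d / 2) - INR d)) in Htot
      by (f_equal; lra).
    rewrite walk_sum_indicator in Htot by lia. lra.
Qed.

(* c = C(d-1, floor(d/2)): a walk of length d-1 crosses from a nonpositive
   to a positive point in one step exactly when it ends at -1 or 0, i.e.
   after floor(d/2) steps up. *)
Lemma walk_sum_pos_jump d : (1 <= d)%nat ->
  walk_sum (d - 1) (fun s => ind pos_test (s + 1) - ind pos_test (s - 1)) = C (d - 1) (d / 2).
Proof.
  intros Hd. pose proof (parity_split d) as Hpar.
  rewrite <- walk_sum_indicator by (destruct (Nat.odd d); lia).
  apply walk_sum_support. intros k Hk.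
  assert (Hd1 : INR (d - 1) = INR d - 1) by (rewrite minus_INR by lia; reflexivity).
  pose proof (INR_parity_split d) as HK.
  unfold ind, pos_test, indicator_at. rewrite Hd1.
  destruct (lt_eq_lt_dec k (d / 2)) as [[Hlt| ->]|Hgt].
  - assert (INR k + 1 <= INR (d / 2)) by (rewrite <- S_INR; apply le_INR; lia).
    destruct (Nat.odd d); repeat destruct Rlt_dec; repeat destruct Req_EM_T; lra.
  - destruct (Nat.odd d); repeat destruct Rlt_dec; repeat destruct Req_EM_T; lra.
  - assert (INR (d / 2) + 1 <= INR k) by (rewrite <- S_INR; apply le_INR; lia).
    destruct (Nat.odd d); repeat destruct Rlt_dec; repeat destruct Req_EM_T; lra.
Qed.

(* Some walk ends at a positive point (all steps up) and some does not
   (all steps down), so 1 <= C_d <= 2^d - 1. *)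
Lemma Cd_bounds d : (1 <= d)%nat -> 1 <= Cd d /\ 1 <= 2 ^ d - Cd d.
Proof.
  intros Hd. rewrite <- walk_sum_pos_count by assumption.
  assert (Hd1 : 1 <= INR d) by (apply (le_INR 1); exact Hd).
  split.
  - apply Rle_trans with (walk_sum d (indicator_at (2 * INR d - INR d))).
    { rewrite walk_sum_indicator, C_nn by lia. lra. }
    apply walk_sum_mono. intros s. unfold indicator_at, ind, pos_test.
    destruct Req_EM_T; destruct Rlt_dec; lra.
  - apply Rle_trans with (walk_sum d (indicator_at (2 * INR 0 - INR d))).
    { rewrite walk_sum_indicator, C_n0 by lia. lra. }
    rewrite <- (Rmult_1_r (2 ^ d)), <- walk_sum_const, <- walk_sum_minus.
    apply walk_sum_mono. intros s. unfold indicator_at, ind, pos_test. simpl INR.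
    destruct Req_EM_T; destruct Rlt_dec; lra.
Qed.

Lemma C_pos n k : 0 < C n k.
Proof.
  unfold C. apply Rdiv_lt_0_compat;
    [apply INR_fact_lt_0|apply Rmult_lt_0_compat; apply INR_fact_lt_0].
Qed.

Lemma odd_half d : Nat.odd d = true -> ((d - 1) / 2 = d / 2)%nat.
Proof.
  intros Ho. pose proof (parity_split d) as Hpar. rewrite Ho in Hpar.
  rewrite Hpar at 1. replace (2 * (d / 2) + 1 - 1)%nat with (d / 2 * 2)%nat by lia.
  apply Nat.div_mul. lia.
Qed.

Lemma mechanism1_calibration d eps delta : (1 <= d)%nat -> 0 < eps -> 0 <= delta ->
  0 < B_ed d eps delta /\
  B_ed d eps delta * C (d - 1) (d / 2) *
    (alpha_ed d eps delta / Cd d - (1 - alpha_ed d eps delta) / (2 ^ d - Cd d)) = 1.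
Proof.
  intros Hd Heps Hdel.
  assert (He : 1 < exp eps) by (pose proof (exp_ineq1 eps ltac:(lra)); lra).
  destruct (Cd_bounds d Hd) as [HN HM].
  pose proof (C_pos (d - 1) (d / 2)) as Hc.
  assert (HD : 0 < 2 ^ d) by (apply pow_lt; lra).
  assert (HB : B_ed d eps delta = (2 ^ d + Cd d * (exp eps - 1))
                 / (C (d - 1) (d / 2) * (exp eps + 2 ^ d * delta - 1))).
  { unfold B_ed. destruct (Nat.odd d) eqn:Ho; [rewrite odd_half by exact Ho|]; reflexivity. }
  rewrite HB. set (e := exp eps) in *. set (N := Cd d) in *. set (D := 2 ^ d) in *.
  set (c := C (d - 1) (d / 2)) in *. split.
  - apply Rdiv_lt_0_compat; [nra|]. apply Rmult_lt_0_compat; nra.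
  - unfold alpha_ed. fold e N D. destruct (Nat.odd d) eqn:Ho.
    + assert (HD2 : D = 2 * N).
      { unfold D, N, Cd. rewrite Ho. destruct d; [lia|]. simpl. rewrite Nat.sub_0_r. ring. }
      rewrite HD2. field. repeat split; nra.
    + field. repeat split; nra.
Qed.

Theorem lemma3 (d : nat) (eps delta : R) :
  (1 <= d)%nat -> 0 < eps -> 0 <= delta -> Cd d * delta < 1 ->
  forall x : list R, length x = d -> Forall (fun t => -1 <= t <= 1) x ->
  forall j : nat, (j < d)%nat ->
  mechanism1_mean d eps delta x j = nth j x 0.
Proof.
  intros Hd Heps Hdel _ x Hx _ j Hj.
  destruct (mechanism1_calibration d eps delta Hd Heps Hdel) as [HB Hscale].
  unfold mechanism1_mean.
  rewrite (mech_mean_formula _ _ d x j HB Hx Hj); cbv zeta.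
  rewrite walk_sum_pos_count, walk_sum_pos_jump, Hscale by exact Hd. ring.
Qed.
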